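(* Let $k\ge0$ and let $n$ be a positive integer of length $l$ with $k(n)\le k$. Then $$\sum_{\substack{m:\ \mathrm{ld}_l(m)=n\\ k(m)=k}}\frac1m=\sum_{m=0}^{\infty}\frac{v_{k-k(n);m}}{(n+1)^{m+1}},$$ and the right-hand side is a series of positive terms converging geometrically.
   Context: Fix $b\ge2$ and $d\in\{0,\dots,b-1\}$. For an integer $n\ge0$, its length $l(n)$ is the smallest $l\ge0$ with $n<b^l$, and $k(n)$ is the number of occurrences of $d$ in its base-$b$ representation without leading zeros. For $m>0$ of length $q\ge l$, $\mathrm{ld}_l(m)=\lfloor m/b^{q-l}\rfloor$. A string is a finite sequence $X=(d_l,\dots,d_1)$ of digits in $\{0,\dots,b-1\}$ (leading zeros allowed), of length $|X|=l\ge0$; its value is $n(X)=\sum_{i=1}^{l}d_ib^{i-1}$ ($0$ for the empty string). For $k\ge0$, $\mu_k=\sum_{X}b^{-|X|}\delta_{n(X)/b^{|X|}}$, the sum over all strings $X$ containing $d$ exactly $k$ times; it is a finite measure on $[0,1)$ of total mass $b$. The complementary moments are $v_{k;m}=\int_{[0,1)}(1-x)^m\,d\mu_k(x)$ (with $0^0=1$). *)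

From mathcomp Require Import all_boot all_order all_algebra.
From mathcomp Require Import all_classical all_reals all_analysis.
Set Implicit Arguments. Unset Strict Implicit. Unset Printing Implicit Defensive.
Import Order.TTheory GRing.Theory Num.Theory.

(* length l(n): smallest l >= 0 with n < b^l (searched in 0..n, which
   suffices since n < 2^n <= b^n for b >= 2) *)
Definition len (b n : nat) : nat := find (fun l => n < b ^ l) (iota 0 n.+1).

Definition digit (b n i : nat) : nat := (n %/ b ^ i) %% b.

Definition kcount (b d n : nat) : nat :=
  count (fun i => digit b n i == d) (iota 0 (len b n)).

Definition ld (b l m : nat) : nat := m %/ b ^ (len b m - l).

(* strings of length L: X i is the digit at position i+1 (weight b^i) *)
Definition strval (b L : nat) (X : {ffun 'I_L -> 'I_b}) : nat :=
  \sum_(i < L) (X i : nat) * b ^ i.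

Definition strcount (b d L : nat) (X : {ffun 'I_L -> 'I_b}) : nat :=
  #|[set i | (X i : nat) == d]|.

Local Open Scope ring_scope.

(* contribution of the strings of length L to v_{k;m} = int (1-x)^m d mu_k *)
Definition vterm (R : realType) (b d k m L : nat) : R :=
  \sum_(X : {ffun 'I_L -> 'I_b} | strcount d X == k)
     (b%:R ^- L) * (1 - (strval X)%:R / (b%:R ^+ L)) ^+ m.

Definition v (R : realType) (b d k m : nat) : R :=
  limn (fun N => \sum_(0 <= L < N) vterm R b d k m L).

From mathcomp Require Import all_boot all_order all_algebra.
From mathcomp Require Import all_classical all_reals all_analysis.
From mathcomp Require Import zify ring lra.
Import Order.TTheory GRing.Theory Num.Theory numFieldNormedType.Exports.

Set Implicit Arguments. Unset Strict Implicit. Unset Printing Implicit Defensive.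

(* Every m with leading digits n is m = n b^L + r with r < b^L, r the value of the string X
   of its last L digits, and then k(m) = k(n) + (number of d in X) and
   1/m = b^-L (n + x)^-1 = sum_M b^-L (1 - x)^M / (n+1)^(M+1), where x = n(X)/b^L lies in [0,1).
   Summing over the strings with k - k(n) digits d and exchanging the two nonnegative series
   gives sum_M v_(k-k(n);M) / (n+1)^(M+1).  The partial sums of the left-hand side up to n b^J
   are exactly the block sums over L < J, which suffices because they are nondecreasing.
   Weighting each digit d by 1/2 bounds v_(j;M) by 2^j / (1 - rho) with rho = (b - 1/2)/b, so the
   terms decay like (n+1)^-M; they are positive because the string d...d of length j contributes. *)

Section Digits.
Variable b : nat.
Hypothesis b_gt1 : (1 < b)%N.

Let b_gt0 : (0 < b)%N. Proof. exact: ltnW. Qed.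

Lemma len_spec m :
  (m < b ^ len b m)%N /\ (forall p, (p < len b m)%N -> (b ^ p <= m)%N).
Proof.
have has_len : has (fun l => (m < b ^ l)%N) (iota 0 m.+1).
  by apply/hasP; exists m; [rewrite mem_iota; lia | exact: ltn_expl].
have len_lt : (len b m < m.+1)%N by rewrite -[X in (_ < X)%N](size_iota 0) -has_find.
split; first by have := nth_find 0 has_len; rewrite nth_iota.
move=> p lt_p; have := before_find 0 lt_p.
by rewrite nth_iota ?add0n ?(ltn_trans lt_p) // => /negbT; rewrite -leqNgt.
Qed.

Lemma len_unique m q :
  (m < b ^ q)%N -> (forall p, (p < q)%N -> (b ^ p <= m)%N) -> len b m = q.
Proof.
move=> m_lt le_m; have q_le_m : (q <= m)%N.
  case: q m_lt le_m => // q _ le_m.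
  have := le_m q (ltnSn q); have := ltn_expl q b_gt1; lia.
rewrite /len (_ : iota 0 m.+1 = iota 0 q ++ iota q (m.+1 - q)); last first.
  by rewrite -iotaD; congr iota; lia.
rewrite find_cat (_ : has _ (iota 0 q) = false); last first.
  by apply/negbTE/hasPn => p; rewrite mem_iota add0n => /andP[_ /le_m]; lia.
by rewrite size_iota; case: (m.+1 - q)%N (subn_gt0 q m.+1) => [|r]; [lia | rewrite /= m_lt addn0].
Qed.

Lemma digit_sum_pow L (F : 'I_L -> nat) : (forall i, F i < b)%N ->
  forall j : 'I_L, digit b (\sum_(i < L) F i * b ^ i) j = F j.
Proof.
elim: L F => [|L IH] F F_lt j; first by case: j.
rewrite big_ord_recl /= expn0 muln1.
under eq_bigr => i _ do rewrite /= expnS mulnCA.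
rewrite -big_distrr /= addnC.
case: (unliftP ord0 j) => [j'|] ->.
  rewrite /digit /= expnS divnMA [b * _]mulnC divnMDl // (divn_small (F_lt ord0)) addn0.
  exact: (IH (fun i => F (lift ord0 i))).
by rewrite /digit /= expn0 divn1 [b * _]mulnC modnMDl modn_small.
Qed.

Lemma sum_pow_lt L (F : 'I_L -> nat) : (forall i, F i < b)%N ->
  (\sum_(i < L) F i * b ^ i < b ^ L)%N.
Proof.
elim: L F => [|L IH] F F_lt; first by rewrite big_ord0.
rewrite big_ord_recl /= expn0 muln1.
under eq_bigr => i _ do rewrite /= expnS mulnCA.
rewrite -big_distrr /= expnS.
have := IH (fun i => F (lift ord0 i)) (fun i => F_lt _); have := F_lt ord0.
move: (\sum_(i < L) _)%N => S; nia.
Qed.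

Lemma digit_window_low n L r j : (r < b ^ L)%N -> (j < L)%N ->
  digit b (n * b ^ L + r) j = digit b r j.
Proof.
move=> r_lt j_lt; rewrite /digit.
have -> : (n * b ^ L = n * b ^ (L - j).-1 * b * b ^ j)%N.
  by rewrite -!mulnA -expnS -expnD; congr (n * b ^ _)%N; lia.
by rewrite divnMDl ?expn_gt0 ?b_gt0 // modnMDl.
Qed.

Lemma digit_window_high n L r j : (r < b ^ L)%N ->
  digit b (n * b ^ L + r) (L + j) = digit b n j.
Proof.
move=> r_lt; rewrite /digit expnD divnMA divnMDl ?expn_gt0 ?b_gt0 //.
by rewrite (divn_small r_lt) addn0.
Qed.

Lemma len_window n L r : (0 < n)%N -> (r < b ^ L)%N ->
  len b (n * b ^ L + r) = (len b n + L)%N.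
Proof.
move=> n_gt0 r_lt; have [n_lt le_n] := len_spec n.
apply: len_unique => [|p p_lt].
  rewrite expnD; apply: (@leq_trans (n.+1 * b ^ L)); first by rewrite mulSn; lia.
  by rewrite leq_mul2r n_lt orbT.
apply: leq_trans (leq_addr _ _); case: (ltnP p L) => [p_lt_L | L_le_p].
  apply: leq_trans (leq_pmull _ n_gt0).
  by rewrite leq_exp2l // ltnW.
by rewrite -(subnK L_le_p) expnD leq_mul2r le_n ?orbT //; lia.
Qed.

Definition kcount_low (d L r : nat) : nat :=
  count (fun i => digit b r i == d) (iota 0 L).

Lemma kcount_window d n L r : (0 < n)%N -> (r < b ^ L)%N ->
  kcount b d (n * b ^ L + r) = (kcount b d n + kcount_low d L r)%N.
Proof.
move=> n_gt0 r_lt; rewrite /kcount len_window // (addnC (len b n)) iotaD count_cat add0n addnC.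
congr (_ + _)%N.
  rewrite -[L in iota L](addn0 L) iotaDl count_map.
  by apply: eq_count => j /=; rewrite digit_window_high.
apply: eq_in_count => i; rewrite mem_iota add0n => /andP[_ i_lt].
by rewrite /= digit_window_low.
Qed.

Lemma ld_window n L r : (0 < n)%N -> (r < b ^ L)%N ->
  ld b (len b n) (n * b ^ L + r) = n.
Proof.
move=> n_gt0 r_lt; rewrite /ld len_window // addKn.
by rewrite divnMDl ?expn_gt0 ?b_gt0 // (divn_small r_lt) addn0.
Qed.

Lemma ld_windowE n m : ld b (len b n) m = n ->
  m = (n * b ^ (len b m - len b n) + m %% b ^ (len b m - len b n))%N.
Proof. by rewrite /ld => m_eq; rewrite {1}(divn_eq m (b ^ (len b m - len b n))) m_eq. Qed.

Lemma strval_lt L (X : {ffun 'I_L -> 'I_b}) : (strval X < b ^ L)%N.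
Proof. exact: sum_pow_lt. Qed.

Lemma digit_strval L (X : {ffun 'I_L -> 'I_b}) (j : 'I_L) :
  digit b (strval X) j = X j.
Proof. exact: digit_sum_pow. Qed.

Lemma strcount_kcount_low d L (X : {ffun 'I_L -> 'I_b}) :
  strcount d X = kcount_low d L (strval X).
Proof.
rewrite /kcount_low -val_enum_ord count_map enumT /strcount cardsE cardE /enum_mem.
by rewrite size_filter; apply: eq_count => j; rewrite /= ?inE digit_strval.
Qed.

Definition strval_ord L (X : {ffun 'I_L -> 'I_b}) : 'I_(b ^ L) := Ordinal (strval_lt X).

Lemma strval_ord_bij L : bijective (@strval_ord L).
Proof.
apply: inj_card_bij; last by rewrite card_ffun !card_ord.
move=> X Y /(congr1 val) /= XY; apply/ffunP => j; apply: ord_inj.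
by rewrite -!digit_strval XY.
Qed.

End Digits.

Local Open Scope classical_set_scope.
Local Open Scope ring_scope.

Lemma sum_expr_strcount (R : comNzRingType) (b d L : nat) (t : R) : (d < b)%N ->
  \sum_(X : {ffun 'I_L -> 'I_b}) t ^+ strcount d X = (t + (b.-1)%:R) ^+ L.
Proof.
move=> d_lt_b; pose w (j : 'I_b) := if (j : nat) == d then t else 1.
have sum_w : \sum_(j : 'I_b) w j = t + (b.-1)%:R.
  rewrite (bigD1 (Ordinal d_lt_b)) //= /w eqxx; congr (_ + _).
  under eq_bigr => j j_neq do rewrite ifN ?(contraNneq (fun e => ord_inj e)) //.
  by rewrite sumr_const cardC1 card_ord.
rewrite -sum_w -[X in _ ^+ X](card_ord L) -prodr_const bigA_distr_bigA /=.
apply: eq_bigr => X _; rewrite -big_mkcond /= /strcount -prodr_const.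
by apply: eq_bigl => i; rewrite inE.
Qed.

Section SeriesFacts.
Variable R : realType.

Lemma nondecreasing_cvgn_subseq (u : R ^nat) (phi : nat -> nat) (l : R) :
  nondecreasing_seq u -> {homo phi : i j / (i <= j)%N} -> (forall N, N <= phi N)%N ->
  (u \o phi) @ \oo --> l -> u @ \oo --> l.
Proof.
move=> u_nd phi_nd phi_ge uphi_l.
have uphi_nd : nondecreasing_seq (u \o phi) by move=> i j /phi_nd /u_nd.
have uphi_le J : u (phi J) <= l.
  by have := nondecreasing_cvgn_le uphi_nd (cvgP _ uphi_l) J; rewrite (cvg_lim _ uphi_l).
have u_le N : u N <= l by apply: le_trans (uphi_le N); apply: u_nd.
have u_cvg : cvgn u by apply: nondecreasing_is_cvgn => //; exists l => _ [N _ <-].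
suff <- : limn u = l by [].
apply/le_anti/andP; split; first by apply: limr_le => //; apply: nearW.
rewrite -(cvg_lim _ uphi_l) //; apply: limr_le; first exact: cvgP uphi_l.
by apply: nearW => J; exact: nondecreasing_cvgn_le u_nd u_cvg _.
Qed.

Lemma eseries_EFin (u : R ^nat) (l : R) :
  series u @ \oo --> l -> (\sum_(0 <= i <oo) (u i)%:E = l%:E)%E.
Proof.
move=> ul; rewrite (_ : (fun N => \sum_(0 <= i < N) (u i)%:E)%E = EFin \o series u).
  by rewrite EFin_lim ?(cvg_lim _ ul) //; exact: cvgP ul.
by apply/funext => N; rewrite /= sumEFin.
Qed.

Lemma cvg_series_EFin (u : R ^nat) (l : R) : (forall i, 0 <= u i) ->
  (\sum_(0 <= i <oo) (u i)%:E = l%:E)%E -> series u @ \oo --> l.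
Proof.
move=> u_ge0 ul.
have : (fun N => \sum_(0 <= i < N) (u i)%:E)%E @ \oo --> l%:E.
  by rewrite -ul; apply: is_cvg_nneseries => i _ _; rewrite lee_fin.
move/fine_cvg; apply: cvg_trans; apply: near_eq_cvg; apply: nearW => N.
by rewrite /= sumEFin.
Qed.

Lemma cvg_series_exchange (w : nat -> nat -> R) (a c : R ^nat) (l : R) :
  (forall i j, 0 <= w i j) ->
  (forall i, series (w i) @ \oo --> a i) ->
  (forall j, series (w ^~ j) @ \oo --> c j) ->
  series c @ \oo --> l -> series a @ \oo --> l.
Proof.
move=> w_ge0 wa wc cl.
apply: cvg_series_EFin => [i|].
  rewrite -(cvg_lim _ (wa i)) //; apply: limr_ge; first exact: cvgP (wa i).
  by apply: nearW => N; apply: sumr_ge0 => j _.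
transitivity (\sum_(0 <= i <oo) \sum_(0 <= j <oo) (w i j)%:E)%E.
  by apply/congr_lim/funext => N; apply: eq_bigr => i _; rewrite (eseries_EFin (wa i)).
rewrite (@nneseries_interchange _ _ xpredT xpredT); last by move=> i j; rewrite lee_fin.
rewrite -(eseries_EFin cl); apply/congr_lim/funext => N; apply: eq_bigr => j _.
exact: eseries_EFin.
Qed.

Lemma cvg_series_shifted_geometric (y x : R) : 0 < y -> 0 <= x < 1 ->
  series (fun M => (1 - x) ^+ M / (y + 1) ^+ M.+1) @ \oo --> (y + x)^-1.
Proof.
move=> y_gt0 /andP[x_ge0 x_lt1].
have -> : (fun M => (1 - x) ^+ M / (y + 1) ^+ M.+1) =
    geometric (y + 1)^-1 ((1 - x) / (y + 1)).
  by apply/funext => M; rewrite /= expr_div_n exprSr invfM; ring.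
have -> : (y + x)^-1 = (y + 1)^-1 * (1 - (1 - x) / (y + 1))^-1.
  by field; rewrite !lt0r_neq0 //; lra.
apply: cvg_geometric_series; rewrite ger0_norm ?divr_ge0 //; try lra.
by rewrite ltr_pdivrMr; lra.
Qed.

End SeriesFacts.

Section DigitMeasureMoments.
Variables (R : realType) (b d : nat).
Hypotheses (b_gt1 : (1 < b)%N) (d_lt_b : (d < b)%N).

Let bR_gt0 : (0 : R) < b%:R. Proof. by rewrite ltr0n ltnW. Qed.

Let bRX_gt0 L : (0 : R) < b%:R ^+ L. Proof. exact: exprn_gt0. Qed.

Lemma strval_frac_ge0 L (X : {ffun 'I_L -> 'I_b}) : 0 <= (strval X)%:R / b%:R ^+ L :> R.
Proof. by rewrite divr_ge0 // ltW. Qed.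

Lemma strval_frac_lt1 L (X : {ffun 'I_L -> 'I_b}) : (strval X)%:R / b%:R ^+ L < 1 :> R.
Proof. by rewrite ltr_pdivrMr // mul1r -natrX ltr_nat strval_lt. Qed.

Lemma vterm_summand_gt0 M L (X : {ffun 'I_L -> 'I_b}) :
  0 < b%:R ^- L * (1 - (strval X)%:R / b%:R ^+ L) ^+ M :> R.
Proof. by rewrite mulr_gt0 ?invr_gt0 // exprn_gt0 // subr_gt0 strval_frac_lt1. Qed.

Lemma vterm_ge0 k M L : 0 <= vterm R b d k M L.
Proof. by apply: sumr_ge0 => X _; apply/ltW/vterm_summand_gt0. Qed.

Lemma sum_strcount_eq_le (t : R) L k : 0 < t ->
  \sum_(X : {ffun 'I_L -> 'I_b} | strcount d X == k) t ^+ k <= (t + (b.-1)%:R) ^+ L.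
Proof.
move=> t_gt0.
apply: (@le_trans _ _ (\sum_(X : {ffun 'I_L -> 'I_b} | strcount d X == k) t ^+ strcount d X)).
  by rewrite le_eqVlt; apply/orP; left; apply/eqP/eq_bigr => X /eqP ->.
rewrite -(sum_expr_strcount _ _ d_lt_b) [leRHS](bigID (fun X => strcount d X == k)) /= lerDl.
by apply: sumr_ge0 => X _; rewrite exprn_ge0 // ltW.
Qed.

Definition rho : R := (2^-1 + (b.-1)%:R) / b%:R.

Lemma rho_gt0 : 0 < rho.
Proof. by rewrite divr_gt0 // ltr_wpDr. Qed.

Lemma rho_lt1 : rho < 1.
Proof.
have b_eq : (b%:R : R) = (b.-1)%:R + 1 by rewrite natr1 prednK // ltnW.
by rewrite ltr_pdivrMr // mul1r [ltRHS]b_eq; lra.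
Qed.

Let norm_rho_lt1 : `|rho| < 1. Proof. by rewrite ger0_norm ?rho_lt1 // ltW ?rho_gt0. Qed.

(* Bound each summand by [b ^- L = b ^- L * 2 ^+ k * 2^-1 ^+ k] and count the strings with
   [sum_strcount_eq_le] at [t = 1/2]. *)
Lemma vterm_le k M L : vterm R b d k M L <= geometric (2 ^+ k) rho L.
Proof.
have summand_le (X : {ffun 'I_L -> 'I_b}) : b%:R ^- L * (1 - (strval X)%:R / b%:R ^+ L) ^+ M <=
                    b%:R ^- L * 2 ^+ k * 2^-1 ^+ k :> R.
  rewrite -mulrA -exprMn mulfV // expr1n mulr1 ger_pMr ?invr_gt0 //.
  by have := strval_frac_ge0 X; have := strval_frac_lt1 X; move=> ? ?; apply: exprn_ile1; lra.
apply: le_trans (ler_sum _ (fun X _ => summand_le X)) _.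
rewrite -mulr_sumr (_ : geometric _ _ _ = b%:R ^- L * 2 ^+ k * (2^-1 + (b.-1)%:R) ^+ L).
  by rewrite ler_wpM2l ?sum_strcount_eq_le ?mulr_ge0 ?invr_ge0 ?exprn_ge0 ?ltW.
by rewrite /= /rho expr_div_n; ring.
Qed.

Lemma vE k M : v R b d k M = limn (series (vterm R b d k M)).
Proof. by []. Qed.

Lemma is_cvg_vterm_series k M : cvgn (series (vterm R b d k M)).
Proof.
apply: (series_le_cvg (@vterm_ge0 k M) _ (@vterm_le k M)).
  by move=> L; rewrite geometric_ge0 ?exprn_ge0 // ltW ?rho_gt0.
exact: is_cvg_geometric_series.
Qed.

Lemma v_le k M : v R b d k M <= 2 ^+ k * (1 - rho)^-1.
Proof.
rewrite vE; apply: limr_le; first exact: is_cvg_vterm_series.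
apply: nearW => N.
apply: le_trans (geometric_le_lim N _ rho_gt0 norm_rho_lt1); last exact: exprn_ge0.
by apply: ler_sum => L _; apply: vterm_le.
Qed.

Lemma vterm_diag_gt0 k M : 0 < vterm R b d k M k.
Proof.
pose Xd : {ffun 'I_k -> 'I_b} := [ffun _ => Ordinal d_lt_b].
have Xd_count : strcount d Xd == k.
  by apply/eqP; rewrite /strcount -[RHS](card_ord k); apply: eq_card => i; rewrite !inE ffunE eqxx.
rewrite /vterm (bigD1 Xd) //= ltr_pwDl ?vterm_summand_gt0 //.
by apply: sumr_ge0 => X _; apply/ltW/vterm_summand_gt0.
Qed.

Lemma v_gt0 k M : 0 < v R b d k M.
Proof.
have series_nd : nondecreasing_seq (series (vterm R b d k M)).
  by apply: nondecreasing_series => L _ _; apply: vterm_ge0.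
rewrite vE; apply: lt_le_trans _ (nondecreasing_cvgn_le series_nd (@is_cvg_vterm_series k M) k.+1).
rewrite /series /= big_nat_recr //= ltr_pwDr ?vterm_diag_gt0 //.
by apply: sumr_ge0 => L _; apply: vterm_ge0.
Qed.

End DigitMeasureMoments.

Section PrefixReciprocalSum.
Variables (R : realType) (b d n : nat).
Hypotheses (b_gt1 : (1 < b)%N) (d_lt_b : (d < b)%N) (n_gt0 : (0 < n)%N).

Let b_gt0 : (0 < b)%N. Proof. exact: ltnW. Qed.

Let nR_gt0 : (0 : R) < n%:R. Proof. by rewrite ltr0n. Qed.

Definition prefix_sum k L : R :=
  \sum_(X : {ffun 'I_L -> 'I_b} | strcount d X == k) ((n * b ^ L + strval X)%:R)^-1.

Definition vratio k M : R := v R b d k M / n.+1%:R ^+ M.+1.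

Lemma cvg_series_string_term L (X : {ffun 'I_L -> 'I_b}) :
  series (fun M => b%:R ^- L * (1 - (strval X)%:R / b%:R ^+ L) ^+ M / n.+1%:R ^+ M.+1)
    @ \oo --> ((n * b ^ L + strval X)%:R : R)^-1.
Proof.
set x : R := (strval X)%:R / b%:R ^+ L.
have x_itv : 0 <= x < 1 by rewrite strval_frac_ge0 ?strval_frac_lt1.
have -> : series (fun M => b%:R ^- L * (1 - x) ^+ M / n.+1%:R ^+ M.+1) =
    (fun N => b%:R ^- L * series (fun M => (1 - x) ^+ M / (n%:R + 1) ^+ M.+1) N).
  by apply/funext => N; rewrite /series /= natr1 big_distrr; apply: eq_bigr => M _; rewrite /= mulrA.
have -> : ((n * b ^ L + strval X)%:R : R)^-1 = b%:R ^- L * (n%:R + x)^-1.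
  have bRX_neq0 : (b%:R ^+ L : R) != 0 by rewrite expf_neq0 // pnatr_eq0 -lt0n.
  rewrite /x natrD natrM natrX -[in LHS](divfK bRX_neq0 (strval X)%:R) -mulrDl invfM.
  by rewrite mulrC.
exact: cvgMl_tmp (cvg_series_shifted_geometric nR_gt0 x_itv).
Qed.

Lemma cvg_series_vterm_moments k L :
  series (fun M => vterm R b d k M L / n.+1%:R ^+ M.+1) @ \oo --> prefix_sum k L.
Proof.
have -> : series (fun M => vterm R b d k M L / n.+1%:R ^+ M.+1) =
    (fun N => \sum_(X : {ffun 'I_L -> 'I_b} | strcount d X == k)
       series (fun M => b%:R ^- L * (1 - (strval X)%:R / b%:R ^+ L) ^+ M / n.+1%:R ^+ M.+1) N).
  apply/funext => N; rewrite /series /= exchange_big /=.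
  by apply: eq_bigr => M _; rewrite /vterm mulr_suml.
by apply: (cvg_big (@add_continuous R)) => // X _; apply: cvg_series_string_term.
Qed.

Lemma cvg_series_vterm_lengths k M :
  series (fun L => vterm R b d k M L / n.+1%:R ^+ M.+1) @ \oo --> vratio k M.
Proof.
have -> : series (fun L => vterm R b d k M L / n.+1%:R ^+ M.+1) =
    (fun N => series (vterm R b d k M) N / n.+1%:R ^+ M.+1).
  by apply/funext => N; rewrite /series /= mulr_suml.
by rewrite /vratio vE; apply: cvgMr_tmp; apply: is_cvg_vterm_series.
Qed.

Lemma vratio_gt0 k M : 0 < vratio k M.
Proof. by rewrite divr_gt0 ?v_gt0 // exprn_gt0. Qed.

Lemma vratio_le k M :
  vratio k M <= geometric (2 ^+ k * (1 - rho R b)^-1 / n.+1%:R) n.+1%:R^-1 M.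
Proof.
rewrite /vratio /= exprVn -[_ / n.+1%:R / _]mulrA -invfM -exprS.
by rewrite ler_wpM2r ?invr_ge0 ?exprn_ge0 // v_le.
Qed.

Let norm_inv_lt1 : `|n.+1%:R^-1 : R| < 1.
Proof. by rewrite ger0_norm ?invr_ge0 // invf_lt1 // ltr1n ltnS. Qed.

Lemma is_cvg_series_vratio k : cvgn (series (vratio k)).
Proof.
apply: (series_le_cvg _ _ (@vratio_le k)) => [M|M|].
- exact/ltW/vratio_gt0.
- by rewrite geometric_ge0 ?mulr_ge0 ?exprn_ge0 ?invr_ge0 // subr_ge0 ltW ?rho_lt1.
- exact: is_cvg_geometric_series.
Qed.

Lemma cvg_series_prefix_sum k : series (prefix_sum k) @ \oo --> limn (series (vratio k)).
Proof.
apply: (@cvg_series_exchange _ (fun L M => vterm R b d k M L / n.+1%:R ^+ M.+1)).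
- by move=> L M; rewrite divr_ge0 ?vterm_ge0 ?exprn_ge0.
- exact: cvg_series_vterm_moments.
- exact: cvg_series_vterm_lengths.
- exact: is_cvg_series_vratio.
Qed.

Definition prefix_recip k m : R :=
  if [&& (0 < m)%N, (len b n <= len b m)%N, ld b (len b n) m == n & kcount b d m == k]
  then (m%:R)^-1 else 0.

Lemma prefix_recip_ge0 k m : 0 <= prefix_recip k m.
Proof. by rewrite /prefix_recip; case: ifP. Qed.

Lemma prefix_recip_window k L r : (kcount b d n <= k)%N -> (r < b ^ L)%N ->
  prefix_recip k (n * b ^ L + r) =
  if kcount_low b d L r == (k - kcount b d n)%N then ((n * b ^ L + r)%:R)^-1 else 0.
Proof.
move=> n_le_k r_lt; rewrite /prefix_recip len_window // ld_window // kcount_window // eqxx.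
rewrite leq_addr addn_gt0 muln_gt0 n_gt0 expn_gt0 b_gt0 /=.
by congr (if _ then _ else _); apply/eqP/eqP; lia.
Qed.

Lemma prefix_recip_outside k m :
  (forall L, ~~ ((n * b ^ L <= m) && (m < n.+1 * b ^ L)))%N -> prefix_recip k m = 0.
Proof.
move=> m_out; rewrite /prefix_recip; case: ifP => // /and4P[_ _ /eqP/ld_windowE + _].
set L := (len b m - len b n)%N => m_eq.
have r_lt : (m %% b ^ L < b ^ L)%N by rewrite ltn_pmod // expn_gt0 b_gt0.
case/negP: (m_out L); rewrite [X in (_ <= X)%N]m_eq leq_addr /= [X in (X < _)%N]m_eq.
by rewrite mulSn addnC ltn_add2r.
Qed.

Lemma sum_prefix_recip_window k L : (kcount b d n <= k)%N ->
  \sum_(n * b ^ L <= m < n.+1 * b ^ L) prefix_recip k m = prefix_sum (k - kcount b d n)%N L.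
Proof.
move=> n_le_k; rewrite -[(n * b ^ L)%N]add0n big_addn mulSn addnK big_mkord.
under eq_bigr => r _ do rewrite addnC prefix_recip_window //.
rewrite (reindex (@strval_ord b b_gt1 L)); last exact/onW_bij/strval_ord_bij.
rewrite /prefix_sum [RHS]big_mkcond; apply: eq_bigr => X _ /=.
by rewrite (strcount_kcount_low b_gt1).
Qed.

Lemma prefix_recip_gap k J m : (n.+1 * b ^ J <= m < n * b ^ J.+1)%N -> prefix_recip k m = 0.
Proof.
move=> /andP[m_ge m_lt]; apply: prefix_recip_outside => L; apply/negP => /andP[L_le L_lt].
case: (leqP L J) => [L_le_J | J_lt_L].
  have : (n.+1 * b ^ L <= n.+1 * b ^ J)%N by rewrite leq_mul2l leq_pexp2l.
  lia.
have : (n * b ^ J.+1 <= n * b ^ L)%N by rewrite leq_mul2l leq_pexp2l ?orbT.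
lia.
Qed.

Lemma sum_prefix_recip_upto k J : (kcount b d n <= k)%N ->
  \sum_(0 <= m < n * b ^ J) prefix_recip k m = series (prefix_sum (k - kcount b d n)%N) J.
Proof.
move=> n_le_k; elim: J => [|J IH].
  rewrite expn0 muln1 /series /= [RHS]big_geq // big_nat_cond big1 // => m /andP[/andP[_ m_lt] _].
  apply: prefix_recip_outside => L; apply/negP => /andP[L_le _].
  by have := @leq_pmulr n (b ^ L); rewrite expn_gt0 b_gt0; lia.
have le1 : (n * b ^ J <= n.+1 * b ^ J)%N by rewrite leq_mul2r leqnSn orbT.
have le2 : (n.+1 * b ^ J <= n * b ^ J.+1)%N by rewrite expnS mulnA leq_mul2r mulnC; nia.
rewrite (big_cat_nat (leq0n _) (leq_trans le1 le2)) /= IH.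
rewrite (big_cat_nat le1 le2) /= sum_prefix_recip_window //.
rewrite big_nat_cond big1 => [|m /andP[m_in _]]; last exact: prefix_recip_gap m_in.
by rewrite addr0 /series /= big_nat_recr.
Qed.

End PrefixReciprocalSum.

Unset Implicit Arguments.

Theorem mainTheorem7 (R : realType) (b d k n : nat) :
  (2 <= b)%N -> (d < b)%N -> (0 < n)%N -> (kcount b d n <= k)%N ->
  let l := len b n in
  let lhs := fun m : nat =>
    if [&& (0 < m)%N, (l <= len b m)%N, ld b l m == n & kcount b d m == k]
    then (m%:R : R)^-1 else 0 in
  let rhs := fun m : nat =>
    v R b d (k - kcount b d n) m / (n.+1%:R ^+ m.+1) in
  (exists S : R,
     (fun N => \sum_(0 <= m < N) lhs m) @ \oo --> S /\
     (fun N => \sum_(0 <= m < N) rhs m) @ \oo --> S) /\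
  (forall m, 0 < rhs m) /\
  (exists C r : R, 0 < C /\ 0 <= r < 1 /\ forall m, rhs m <= C * r ^+ m).
Proof.
move=> b_gt1 d_lt_b n_gt0 n_le_k l lhs rhs; set j := (k - kcount b d n)%N in rhs *.
have -> : lhs = prefix_recip R b d n k by [].
have -> : rhs = vratio R b d n j by [].
split; [exists (limn (series (vratio R b d n j))); split | split].
- apply: (@nondecreasing_cvgn_subseq _ _ (fun J => n * b ^ J)%N).
  + by apply: nondecreasing_series => m _ _; apply: prefix_recip_ge0.
  + by move=> i i' le_ii'; rewrite leq_mul2l leq_pexp2l ?orbT // ltnW.
  + by move=> N; apply: leq_trans (ltnW (ltn_expl N b_gt1)) (leq_pmull _ n_gt0).
  rewrite (_ : _ \o _ = series (prefix_sum R b d n j)).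
    exact: cvg_series_prefix_sum.
  by apply/funext => J; rewrite /= sum_prefix_recip_upto.
- exact: is_cvg_series_vratio.
- by move=> m; apply: vratio_gt0.
exists (2 ^+ j * (1 - rho R b)^-1 / n.+1%:R), n.+1%:R^-1.
split; [|split; [|exact: vratio_le]].
- by rewrite !mulr_gt0 ?exprn_gt0 ?invr_gt0 ?subr_gt0 ?rho_lt1.
- by rewrite invr_ge0 ler0n /= invf_lt1 ?ltr0n // ltr1n ltnS.
Qed.
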